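(* Let $\rho\in\{1/2,1\}$, let $s>0$ and $\eta>0$ be real numbers, let $q\in\mathbb{C}$, and let $\epsilon<1$ be real. Define $\ell:(0,\infty)\to\mathbb{R}$ by $$\ell(\gamma) = -\rho\log(1+\gamma s) + \rho\,\frac{|q|^2}{\gamma^{-1}+s} + (\epsilon-1)\log\gamma - \eta\gamma .$$ Then $\ell$ has at most a single local maximum on $(0,\infty)$.
   Context: This function arises in a sparse Bayesian learning scheme: $\rho=1/2$ corresponds to a real signal model and $\rho=1$ to a complex one; $\epsilon$ is the shape parameter and $\eta$ the (positive) rate parameter of a gamma hyperprior; $s=\mathbf{h}^H\mathbf{C}^{-1}\mathbf{h}$ and $q=\mathbf{y}^H\mathbf{C}^{-1}\mathbf{h}$ for a nonzero vector $\mathbf{h}$, a vector $\mathbf{y}$, and a Hermitian positive definite matrix $\mathbf{C}$, so in particular $s>0$. The domain of $\ell$ is $(0,\infty)$. *)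

From Stdlib Require Import Reals.
From Coquelicot Require Import Coquelicot.
Open Scope R_scope.

Definition ell (rho s eta eps : R) (q : C) (gamma : R) : R :=
  - rho * ln (1 + gamma * s)
  + rho * ((Cmod q) ^ 2 / (/ gamma + s))
  + (eps - 1) * ln gamma
  - eta * gamma.

Definition is_local_max_pos (f : R -> R) (x : R) : Prop :=
  0 < x /\
  exists delta : R, 0 < delta /\
    forall y : R, 0 < y -> Rabs (y - x) < delta -> f y <= f x.

(* On (0, +oo) we have ell'(x) = P(x) / (x (1 + x s)^2) with P a cubic whose
   two leading coefficients are negative.  If P vanished at 0 < g1 < g2, then
   P(x) = (x - g1) (x - g2) (a (x + g1 + g2) + b) with a, b the leading
   coefficients, so P, hence ell', would be positive on (g1, g2); ell would then
   increase just to the right of g1, and g1 could not be a local maximum. *)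
From Stdlib Require Import Reals Lra Psatz.
From Coquelicot Require Import Coquelicot.
Open Scope R_scope.

Lemma local_max_pos_derive_eq0 (f : R -> R) (x l : R) :
  derivable_pt_lim f x l -> is_local_max_pos f x -> l = 0.
Proof.
  intros Hder [Hx [d [Hd Hmax]]].
  set (pr := exist (fun l => derivable_pt_lim f x l) l Hder).
  change (derive_pt f x pr = 0).
  set (m := Rmin d x).
  assert (Hmd : m <= d) by apply Rmin_l.
  assert (Hmx : m <= x) by apply Rmin_r.
  assert (Hm : 0 < m) by (apply Rmin_pos; lra).
  apply (deriv_maximum f (x - m) (x + m)); try lra.
  intros y Hy1 Hy2. apply Hmax; [lra | apply Rabs_def1; lra].
Qed.

Lemma not_local_max_pos_of_derive_pos_right (f f' : R -> R) (g b : R) :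
  g < b ->
  (forall y, g <= y <= b -> derivable_pt_lim f y (f' y)) ->
  (forall y, g < y < b -> 0 < f' y) ->
  ~ is_local_max_pos f g.
Proof.
  intros Hgb Hder Hpos [Hg [d [Hd Hmax]]].
  set (y := g + Rmin d (b - g) / 2).
  assert (Hmd : Rmin d (b - g) <= d) by apply Rmin_l.
  assert (Hmb : Rmin d (b - g) <= b - g) by apply Rmin_r.
  assert (Hm : 0 < Rmin d (b - g)) by (apply Rmin_pos; lra).
  destruct (MVT_cor2 f f' g y) as [c [Hincr Hc]].
  - unfold y; lra.
  - intros c Hc; apply Hder; unfold y in *; lra.
  - assert (Hfc : 0 < f' c) by (apply Hpos; unfold y in *; lra).
    assert (Hfy : f y <= f g) by (apply Hmax; unfold y; [lra | apply Rabs_def1; lra]).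
    assert (0 < f' c * (y - g)) by (apply Rmult_lt_0_compat; unfold y; lra).
    lra.
Qed.

Lemma local_max_pos_unique (f f' : R -> R) :
  (forall y, 0 < y -> derivable_pt_lim f y (f' y)) ->
  (forall g1 g2 x, 0 < g1 -> g1 < x < g2 -> f' g1 = 0 -> f' g2 = 0 -> 0 < f' x) ->
  forall g1 g2, is_local_max_pos f g1 -> is_local_max_pos f g2 -> g1 = g2.
Proof.
  intros Hder Hbetween.
  assert (Hlt : forall g1 g2, g1 < g2 ->
            is_local_max_pos f g1 -> is_local_max_pos f g2 -> False).
  { intros g1 g2 H12 M1 M2.
    pose proof (proj1 M1) as Hg1.
    pose proof (local_max_pos_derive_eq0 _ _ _ (Hder g1 Hg1) M1) as Z1.
    pose proof (local_max_pos_derive_eq0 _ _ _ (Hder g2 (proj1 M2)) M2) as Z2.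
    apply (not_local_max_pos_of_derive_pos_right f f' g1 g2 H12); [| | exact M1].
    - intros y Hy; apply Hder; lra.
    - intros y Hy; exact (Hbetween g1 g2 y Hg1 Hy Z1 Z2). }
  intros g1 g2 M1 M2.
  destruct (Rtotal_order g1 g2) as [H12 | [H12 | H21]]; auto; exfalso.
  - exact (Hlt g1 g2 H12 M1 M2).
  - exact (Hlt g2 g1 H21 M2 M1).
Qed.

Definition cubic (a b c d x : R) : R := a * x ^ 3 + b * x ^ 2 + c * x + d.

Lemma cubic_pos_between_roots (a b c d g1 g2 x : R) :
  a < 0 -> b <= 0 -> 0 < g1 -> g1 < x < g2 ->
  cubic a b c d g1 = 0 -> cubic a b c d g2 = 0 -> 0 < cubic a b c d x.
Proof.
  intros Ha Hb Hg1 Hx Z1 Z2.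
  assert (Hfactor : (g2 - g1) * cubic a b c d x
          = (g2 - g1) * ((x - g1) * (x - g2) * (a * (x + g1 + g2) + b))).
  { transitivity ((g2 - x) * cubic a b c d g1 + (x - g1) * cubic a b c d g2
                  + (g2 - g1) * ((x - g1) * (x - g2) * (a * (x + g1 + g2) + b))).
    - unfold cubic; ring.
    - rewrite Z1, Z2; ring. }
  apply Rmult_eq_reg_l in Hfactor; [| lra].
  rewrite Hfactor.
  assert (a * (x + g1 + g2) + b < 0) by nra.
  assert (0 < (x - g1) * (g2 - x)) by nra.
  nra.
Qed.

Definition ell_deriv (rho s eta eps : R) (q : C) (x : R) : R :=
  - rho * s / (1 + x * s) + rho * Cmod q ^ 2 / (1 + x * s) ^ 2 + (eps - 1) / x - eta.

Lemma ell_derivable (rho s eta eps : R) (q : C) (x : R) :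
  0 < s -> 0 < x -> derivable_pt_lim (ell rho s eta eps q) x (ell_deriv rho s eta eps q x).
Proof.
  intros Hs Hx. apply is_derive_Reals. unfold ell, ell_deriv.
  assert (0 < / x) by (apply Rinv_0_lt_compat; lra).
  auto_derive.
  - repeat split; nra.
  - field; repeat split; nra.
Qed.

Lemma ell_deriv_cubic (rho s eta eps : R) (q : C) (x : R) :
  0 < s -> 0 < x ->
  ell_deriv rho s eta eps q x * (x * (1 + x * s) ^ 2)
  = cubic (- eta * s ^ 2) (- rho * s ^ 2 + (eps - 1) * s ^ 2 - 2 * eta * s)
          (- rho * s + rho * Cmod q ^ 2 + 2 * (eps - 1) * s - eta) (eps - 1) x.
Proof. intros Hs Hx. unfold ell_deriv, cubic. field. split; nra. Qed.

Lemma ell_deriv_pos_between_critical (rho s eta eps : R) (q : C) (g1 g2 x : R) :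
  0 <= rho -> 0 < s -> 0 < eta -> eps < 1 -> 0 < g1 -> g1 < x < g2 ->
  ell_deriv rho s eta eps q g1 = 0 -> ell_deriv rho s eta eps q g2 = 0 ->
  0 < ell_deriv rho s eta eps q x.
Proof.
  intros Hrho Hs Heta Heps Hg1 Hx Z1 Z2.
  assert (Hw : 0 < x * (1 + x * s) ^ 2)
    by (apply Rmult_lt_0_compat; [lra | apply pow_lt; nra]).
  assert (Hcubic : 0 < ell_deriv rho s eta eps q x * (x * (1 + x * s) ^ 2)).
  { assert (Hs2 : 0 < s ^ 2) by (apply pow_lt; lra).
    rewrite ell_deriv_cubic by lra.
    apply (cubic_pos_between_roots _ _ _ _ g1 g2); [nra | nra | lra | lra | |].
    - rewrite <- ell_deriv_cubic, Z1 by lra; ring.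
    - rewrite <- ell_deriv_cubic, Z2 by lra; ring. }
  nra.
Qed.

Theorem proposition1 (rho s eta eps : R) (q : C) :
  (rho = 1 / 2 \/ rho = 1) -> 0 < s -> 0 < eta -> eps < 1 ->
  forall g1 g2 : R,
    is_local_max_pos (ell rho s eta eps q) g1 ->
    is_local_max_pos (ell rho s eta eps q) g2 ->
    g1 = g2.
Proof.
  intros Hrho Hs Heta Heps.
  apply (local_max_pos_unique _ (ell_deriv rho s eta eps q)).
  - intros y Hy; exact (ell_derivable rho s eta eps q y Hs Hy).
  - intros g1 g2 x Hg1 Hx Z1 Z2.
    apply (ell_deriv_pos_between_critical _ _ _ _ _ g1 g2); auto; lra.
Qed.
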